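(* Let $p$ be a prime, let $(\mathcal G,\Gamma)$ be a finite proper graph of pro-$p$ groups, $G=\Pi_1(\mathcal G,\Gamma)$, and let $U$ be a (closed) normal subgroup of $G$. Put $\tilde U=\langle \mathcal G(v)^g\cap U\mid g\in G,\ v\in V(\Gamma)\rangle$ (closed subgroup generated). Then $\tilde U$ is normal in $G$ and $G/\tilde U\cong\Pi_1(\mathcal G_U,\Gamma)$, where $(\mathcal G_U,\Gamma)$ is the graph of pro-$p$ groups with $\mathcal G_U(m)=\mathcal G(m)U/U$ for each vertex or edge $m$ of $\Gamma$, and boundary maps $\partial_0,\partial_1$ the natural inclusions in $G/U$.
   Context: A finite graph of pro-$p$ groups $(\mathcal G,\Gamma)$ over a finite graph $\Gamma$ (maps $d_0,d_1$ giving edge endpoints) assigns pro-$p$ groups $\mathcal G(v)$, $\mathcal G(e)$ and monomorphisms $\partial_i:\mathcal G(e)\to\mathcal G(d_i(e))$. Its fundamental pro-$p$ group, with respect to a maximal subtree $D$, is given by the pro-$p$ presentation $\langle\mathcal G(v),t_e\mid t_e=1\ (e\in D),\ \partial_0(g)=t_e\partial_1(g)t_e^{-1}\ (g\in\mathcal G(e))\rangle$. Proper means each $\mathcal G(v)\to\Pi_1$ is injective, and vertex/edge groups are identified with their images in $G$. $h^g=g^{-1}hg$. *)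

From HB Require Import structures.
From mathcomp Require Import all_boot monoid.
From mathcomp Require Import classical_sets topology.

Set Implicit Arguments.
Unset Strict Implicit.
Unset Printing Implicit Defensive.

Local Open Scope classical_set_scope.
Local Open Scope group_scope.

HB.mixin Record isTopGroup G of Group G & Topological G := {
  mulg_continuous : continuous (fun xy : (G : topologicalType) * (G : topologicalType) => xy.1 * xy.2);
  invg_continuous : continuous (@inv G : (G : topologicalType) -> (G : topologicalType))
}.

#[short(type="topGroupType")]
HB.structure Definition TopGroup := {G of isTopGroup G & Group G & Topological G}.

(* All groups below are subsets H of an ambient topological group T, with the
   subspace topology. *)
Section SetGroups.
Variable T : topGroupType.

Definition subgroup (H : set T) : Prop :=
  H 1 /\ forall x y, H x -> H y -> H (x * y^-1).

Definition rel_open (A H : set T) : Prop := exists O, open O /\ A = O `&` H.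
Definition rel_closed (A H : set T) : Prop := exists C, closed C /\ A = C `&` H.

Definition normal_in (N H : set T) : Prop :=
  subgroup N /\ N `<=` H /\ forall g x, H g -> N x -> N (x ^ g).

Definition rel_hausdorff (H : set T) : Prop :=
  forall x y, H x -> H y -> x <> y ->
    exists A B, [/\ open A, open B, A x, B y & A `&` B `&` H = set0].

Definition index_ppow (p : nat) (N H : set T) : Prop :=
  exists (s : seq T) (k : nat),
    [/\ size s = (p ^ k)%N,
        forall x, x \in s -> H x,
        forall i j, (i < size s)%N -> (j < size s)%N ->
           N ((nth 1 s i)^-1 * nth 1 s j) -> i = j
      & forall h, H h -> exists2 i, (i < size s)%N & N ((nth 1 s i)^-1 * h)].

(* H is a pro-p group: a compact Hausdorff totally disconnected (i.e. the open
   normal subgroups form a base of neighbourhoods of 1) topological group in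
   which every open normal subgroup has p-power index. *)
Definition pro_p (p : nat) (H : set T) : Prop :=
  [/\ subgroup H, compact H, rel_hausdorff H,
      (forall O, open O -> O 1 -> exists N, [/\ normal_in N H, rel_open N H & N `<=` O])
    & (forall N, normal_in N H -> rel_open N H -> index_ppow p N H)].

Definition closed_gen (H S : set T) : set T :=
  \bigcap_(K in [set K | [/\ subgroup K, K `<=` H, rel_closed K H & S `<=` K]]) K.

End SetGroups.

Definition hom (T1 T2 : topGroupType) (H1 : set T1) (H2 : set T2) (f : T1 -> T2) : Prop :=
  [/\ forall x y, H1 x -> H1 y -> f (x * y) = f x * f y,
      f @` H1 `<=` H2
    & {within H1, continuous f}].

Definition mono (T1 T2 : topGroupType) (H1 : set T1) (H2 : set T2) (f : T1 -> T2) : Prop :=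
  hom H1 H2 f /\ forall x y, H1 x -> H1 y -> f x = f y -> x = y.

(* (HR, rho) realizes the quotient group H/N: rho is a continuous surjective
   homomorphism from H onto the Hausdorff group HR with kernel N (as H is compact,
   rho then induces a topological isomorphism H/N ~ HR). *)
Definition is_quotient (T R : topGroupType) (H N : set T) (HR : set R) (rho : T -> R) : Prop :=
  [/\ hom H HR rho, rho @` H = HR, rel_hausdorff HR & forall x, H x -> (rho x = 1 <-> N x)].

Section Tree.
Local Unset Implicit Arguments.
Definition spanning_tree (V E : finType) (d0 d1 : E -> V) (D : {set E}) : Prop :=
  (forall x y : V, connect [rel a b | [exists e in D,
       ((d0 e == a) && (d1 e == b)) || ((d0 e == b) && (d1 e == a))]] x y)
  /\ #|D|.+1 = #|V|.
End Tree.

Section GraphOfGroups.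
Local Unset Implicit Arguments.
Variables (p : nat) (V E : finType) (d0 d1 : E -> V).
Variables (TV : V -> topGroupType) (HV : forall v, set (TV v)).
Variables (TE : E -> topGroupType) (HE : forall e, set (TE e)).
Variables (del0 : forall e, TE e -> TV (d0 e)) (del1 : forall e, TE e -> TV (d1 e)).

Definition graph_of_pro_p : Prop :=
  [/\ forall v : V, pro_p p (HV v), forall e : E, pro_p p (HE e),
      forall e : E, mono (HE e) (HV (d0 e)) (del0 e)
    & forall e : E, mono (HE e) (HV (d1 e)) (del1 e)].

Definition pi1_data (D : {set E}) (T : topGroupType) (H : set T)
    (iota : forall v, TV v -> T) (t : E -> T) : Prop :=
  [/\ forall v, hom (HV v) H (iota v),
      forall e, H (t e),
      forall e, e \in D -> t e = 1
    & forall e g, HE e g -> iota (d0 e) (del0 e g) = t e * iota (d1 e) (del1 e g) * (t e)^-1].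

(* H (with iota, t) is the fundamental pro-p group w.r.t. D, i.e. the pro-p group
   given by the pro-p presentation <G(v), t_e | t_e = 1 (e in D),
   del0(g) = t_e del1(g) t_e^-1>, characterised by its universal property. *)
Definition is_pi1 (D : {set E}) (T : topGroupType) (H : set T)
    (iota : forall v, TV v -> T) (t : E -> T) : Prop :=
  [/\ pro_p p H, pi1_data D T H iota t
    & forall (K : topGroupType) (HK : set K) (iotaK : forall v, TV v -> K) (tK : E -> K),
        pro_p p HK -> pi1_data D K HK iotaK tK ->
        let ok phi := [/\ hom H HK phi,
                          forall v x, HV v x -> phi (iota v x) = iotaK v x
                        & forall e, phi (t e) = tK e] in
        (exists phi, ok phi) /\
        (forall phi1 phi2, ok phi1 -> ok phi2 -> forall x, H x -> phi1 x = phi2 x)].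

End GraphOfGroups.

(* The generators [G(v)^g \cap U] of [Ũ] are permuted by
   conjugation in [G], so [Ũ] is normal.  [G/Ũ] is built as the group of
   chosen coset representatives with the quotient topology; as a quotient of
   the pro-p group [G] by a closed normal subgroup it is pro-p.  It satisfies
   the universal property of [Π1(G_U, Γ)]: compatible maps from the groups
   [G(v)U/U] to a pro-p group [K], composed with [G -> G/U], are compatible
   maps for [(G, Γ)], hence come from a unique [ψ : G -> K].  Since
   [G(v)^g \cap U] maps to [1] in [G/U], [ψ] kills it, and therefore kills
   [Ũ] because its kernel is closed ([K] is Hausdorff); so [ψ] factors
   through [G/Ũ]. *)

From HB Require Import structures.
From mathcomp Require Import all_boot monoid.
From mathcomp Require Import boolp classical_sets topology.

Set Implicit Arguments.
Unset Strict Implicit.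
Unset Printing Implicit Defensive.

Local Open Scope classical_set_scope.
Local Open Scope group_scope.

(** * Topological groups *)

Lemma within_continuousP (X Y : topologicalType) (A : set X) (f : X -> Y) :
  {within A, continuous f} <->
  forall O, open O -> exists2 O', open O' & O' `&` A = f @^-1` O `&` A.
Proof.
split=> [/continuousP hf O /hf /open_subspaceP //|hf].
by apply/continuousP => O /hf /open_subspaceP.
Qed.

Lemma continuous_openP (X Y : topologicalType) (f : X -> Y) :
  (forall x A, open A -> A (f x) -> nbhs x (f @^-1` A)) -> continuous f.
Proof.
move=> h x W /=; rewrite nbhsE => -[B [oB Bfx] sBW].
by apply: filterS (h x B oB Bfx) => y /sBW.
Qed.

Lemma within_continuous_comp (X Y Z : topologicalType) (A : set X) (B : set Y)
    (f : X -> Y) (g : Y -> Z) :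
  {within A, continuous f} -> f @` A `<=` B -> {within B, continuous g} ->
  {within A, continuous (g \o f)}.
Proof.
move=> /within_continuousP fc fAB /within_continuousP gc.
apply/within_continuousP => O /gc[Og /fc[Of oOf ef] eg].
exists Of => //; apply/seteqP; split=> x [Ofx Ax]; split => //.
  have : (f @^-1` Og `&` A) x by rewrite -ef.
  case=> Ogfx _; have : (Og `&` B) (f x) by split => //; apply: fAB; exists x.
  by rewrite eg => -[].
have : (g @^-1` O `&` B) (f x) by split => //; apply: fAB; exists x.
rewrite -eg => -[Ogfx _].
by have : (f @^-1` Og `&` A) x by []; rewrite -ef => -[].
Qed.

Lemma compact_closure_sub (T : topGroupType) (H K : set T) y :
  rel_hausdorff H -> compact K -> K `<=` H -> H y -> closure K y -> K y.
Proof.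
move=> hH cK KH Hy cly; apply: contrapT => nKy.
have PF : ProperFilter (within K (nbhs y)) by apply: within_nbhs_proper.
have [k [Kk clk]] := cK _ PF (withinT _ _).
have nyk : y <> k by move=> e; apply: nKy; rewrite e.
have [A [B [oA oB Ay Bk e]]] := hH y k Hy (KH _ Kk) nyk.
have FA : within K (nbhs y) (A `&` K).
  by apply: filterS (open_nbhs_nbhs (conj oA Ay)) => z Az Kz.
have [z [[Az Kz] Bz]] := clk _ _ FA (open_nbhs_nbhs (conj oB Bk)).
have : (A `&` B `&` H) z by split; [split|exact: KH].
by rewrite e.
Qed.

(* [f] maps closed subsets of the compact [A] to relatively closed subsets of
   the Hausdorff [H], so [h] is continuous for the topology that [f] induces. *)
Lemma continuous_factor (X Z : topologicalType) (Y : topGroupType) (A : set X)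
    (H : set Y) (f : X -> Y) (g : X -> Z) (h : Y -> Z) :
  compact A -> rel_hausdorff H -> f @` A `<=` H ->
  {within A, continuous f} -> {within A, continuous g} ->
  (forall a, A a -> h (f a) = g a) -> {within f @` A, continuous h}.
Proof.
move=> cA hH fAH fc gc hfg; apply/within_continuousP => O oO.
have [Og oOg eg] := (within_continuousP _ _).1 gc O oO.
have egP a : A a -> Og a <-> O (g a).
  move=> Aa; split=> [Oga|Oga].
    by have : (Og `&` A) a by []; rewrite eg => -[].
  by have : (g @^-1` O `&` A) a by []; rewrite -eg => -[].
pose C := A `&` ~` Og.
have cfC : compact (f @` C).
  apply: continuous_compact; last exact: compact_closedI (open_closedC oOg).
  by apply: continuous_subspaceW fc => ? [].
have fCH : f @` C `<=` H by move=> _ [c [Ac _] <-]; apply: fAH; exists c.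
exists (~` closure (f @` C)); first exact/closed_openC/closed_closure.
apply/seteqP; split=> y [].
  move=> ncl [a Aa ey]; split; last by exists a.
  rewrite /= -ey hfg //; apply/(egP a Aa); apply: contrapT => nOa; apply: ncl.
  by apply: subset_closure; rewrite -ey; exists a.
move=> /= Ohy [a Aa ey]; split; last by exists a.
move=> /(compact_closure_sub hH cfC fCH) [|c [Ac nOc] ec].
  by apply: fAH; exists a.
by apply: nOc; apply/(egP c Ac); rewrite -hfg // ec.
Qed.

Section TopGroupTheory.
Variable T : topGroupType.
Implicit Types (O C : set T) (a b : T).

Lemma open_mulg_nbhs O a b : open O -> O (a * b) ->
  exists Oa Ob, [/\ open Oa, open Ob, Oa a, Ob b &
                    forall x y, Oa x -> Ob y -> O (x * y)].
Proof.
move=> oO Oab.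
have : nbhs ((a, b) : T * T) ((fun xy : T * T => xy.1 * xy.2) @^-1` O).
  by apply: (@mulg_continuous T (a, b)); apply: open_nbhs_nbhs.
case=> [[P Q]] /= [nP nQ] sPQ.
move: nP nQ; rewrite !nbhsE => -[Pa [oPa Paa] sP] [Qb [oQb Qbb] sQ].
exists Pa, Qb; split => // x y Px Qy.
by apply: (sPQ (x, y)); split; [apply: sP|apply: sQ].
Qed.

Lemma open_invg O : open O -> open [set x | O x^-1].
Proof. exact: (continuousP _).1 (@invg_continuous T) O. Qed.

Lemma open_mulgr O a : open O -> open [set x | O (x * a)].
Proof.
move=> oO; rewrite openE => x /= Oxa.
have [Ox [Oa [oOx _ Oxx Oaa h]]] := open_mulg_nbhs oO Oxa.
by rewrite /interior nbhsE; exists Ox => [|y Oy]; [split|exact: h].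
Qed.

Lemma open_mulgl O a : open O -> open [set x | O (a * x)].
Proof.
move=> oO; rewrite openE => x /= Oax.
have [Oa [Ox [_ oOx Oaa Oxx h]]] := open_mulg_nbhs oO Oax.
by rewrite /interior nbhsE; exists Ox => [|y Oy]; [split|exact: h].
Qed.

Lemma closed_conjg C h : closed C -> closed [set y | C (y ^ h)].
Proof.
move=> cC; rewrite -openC.
have := open_mulgl h^-1 (open_mulgr h (closed_openC cC)).
by congr open; apply/seteqP; split => y /=; rewrite conjgE mulgA.
Qed.

End TopGroupTheory.

Section SubgroupTheory.
Variables (T : topGroupType) (G : set T).
Hypothesis sG : subgroup G.

Lemma subgroup1 : G 1. Proof. by case: sG. Qed.

Lemma subgroupV x : G x -> G x^-1.
Proof. by move=> Gx; have := sG.2 1 x subgroup1 Gx; rewrite mul1g. Qed.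

Lemma subgroupM x y : G x -> G y -> G (x * y).
Proof. by move=> Gx Gy; have := sG.2 x y^-1 Gx (subgroupV Gy); rewrite invgK. Qed.

Lemma subgroupJ x g : G x -> G g -> G (x ^ g).
Proof. by move=> Gx Gg; rewrite conjgE; apply: subgroupM (subgroupV Gg) (subgroupM Gx Gg). Qed.

End SubgroupTheory.

Section Homomorphisms.
Variables (T1 T2 : topGroupType) (H1 : set T1) (H2 : set T2) (f : T1 -> T2).
Hypotheses (hf : hom H1 H2 f) (sH1 : subgroup H1).

Lemma hom_mulg x y : H1 x -> H1 y -> f (x * y) = f x * f y.
Proof. by case: hf => fM _ _; apply: fM. Qed.

Lemma hom_mem x : H1 x -> H2 (f x).
Proof. by case: hf => _ fH _ Hx; apply: fH; exists x. Qed.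

Lemma hom_continuous : {within H1, continuous f}.
Proof. by case: hf. Qed.

Lemma hom1 : f 1 = 1.
Proof.
have H11 := subgroup1 sH1.
by apply: (mulgI (f 1)); rewrite -hom_mulg // !mulg1.
Qed.

Lemma homV x : H1 x -> f x^-1 = (f x)^-1.
Proof.
move=> Hx; apply: (mulgI (f x)).
by rewrite -hom_mulg ?mulgV ?hom1 //; apply: subgroupV.
Qed.

Lemma homJ x g : H1 x -> H1 g -> f (x ^ g) = f x ^ f g.
Proof.
move=> Hx Hg; have Hg' := subgroupV sH1 Hg.
by rewrite !conjgE hom_mulg ?hom_mulg ?homV //; apply: subgroupM.
Qed.

Lemma rel_closed_ker : subgroup H2 -> rel_hausdorff H2 ->
  rel_closed [set x | H1 x /\ f x = 1] H1.
Proof.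
move=> sH2 hH2; exists (closure [set x | H1 x /\ f x = 1]).
split; first exact: closed_closure.
apply/seteqP; split=> x; first by move=> [Hx fx]; split => //; apply: subset_closure.
move=> [cl Hx]; split => //; apply: contrapT => nfx.
have [A [B [oA oB Afx B1 e]]] := hH2 _ _ (hom_mem Hx) (subgroup1 sH2) nfx.
have [O' oO' e'] := (within_continuousP _ _).1 hom_continuous A oA.
have O'x : O' x by have : (f @^-1` A `&` H1) x by []; rewrite -e' => -[].
have [z [[Hz fz] O'z]] := cl _ (open_nbhs_nbhs (conj oO' O'x)).
have [Afz _] : (f @^-1` A `&` H1) z by rewrite -e'.
have : (A `&` B `&` H2) 1 by split; [split; rewrite // -fz|exact: subgroup1].
by rewrite e.
Qed.

Lemma subgroup_ker : subgroup [set x | H1 x /\ f x = 1].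
Proof.
split=> [|x y [Hx fx] [Hy fy]]; first by split; [exact: subgroup1|exact: hom1].
have HyV := subgroupV sH1 Hy.
by split; [exact: subgroupM|rewrite hom_mulg // homV // fx fy invg1 mulg1].
Qed.

End Homomorphisms.

Lemma hom_comp (T1 T2 T3 : topGroupType) (H1 : set T1) (H2 : set T2) (H3 : set T3)
    (f : T1 -> T2) (g : T2 -> T3) :
  hom H1 H2 f -> hom H2 H3 g -> hom H1 H3 (g \o f).
Proof.
move=> hf hg; have fH12 : f @` H1 `<=` H2 by move=> _ [x Hx <-]; apply: (hom_mem hf).
split.
- move=> x y Hx Hy /=.
  by rewrite (hom_mulg hf) // (hom_mulg hg) //; apply: fH12; [exists x|exists y].
- by move=> _ [x Hx <-]; apply: (hom_mem hg); apply: fH12; exists x.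
- exact: within_continuous_comp (hom_continuous hf) fH12 (hom_continuous hg).
Qed.

Section ClosedGeneration.
Variables (T : topGroupType) (G S : set T).
Hypotheses (sG : subgroup G) (SG : S `<=` G).

Lemma closed_gen_subG K :
  subgroup K -> K `<=` G -> rel_closed K G -> S `<=` K -> closed_gen G S `<=` K.
Proof. by move=> sK KG cK SK x; apply. Qed.

Lemma closed_gen_sub : closed_gen G S `<=` G.
Proof.
apply: closed_gen_subG => //.
by exists setT; split; [exact: closedT|rewrite setTI].
Qed.

Lemma sub_closed_gen : S `<=` closed_gen G S.
Proof. by move=> x Sx K [_ _ _]; apply. Qed.

Lemma closed_gen_subgroup : subgroup (closed_gen G S).
Proof.
split=> [K [sK _ _ _]|x y hx hy K FK]; first exact: subgroup1.
by case: (FK) => sK _ _ _; apply: sK.2; [exact: hx|exact: hy].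
Qed.

Lemma closed_gen_rel_closed : rel_closed (closed_gen G S) G.
Proof.
pose F := [set K | [/\ subgroup K, K `<=` G, rel_closed K G & S `<=` K]].
exists (\bigcap_(K in F) closure K); split.
  by apply: closed_bigI => K _; exact: closed_closure.
apply/seteqP; split=> x.
  move=> hx; split; last exact: closed_gen_sub.
  by move=> K FK; apply: subset_closure; exact: hx K FK.
move=> [hx Gx] K FK; have := hx K FK.
case: FK => _ _ [C [cC ->]] _.
by move/(closureS (@subIsetl _ C G)); rewrite -(closure_id C).1.
Qed.

Lemma closed_gen_normal : (forall g x, G g -> S x -> S (x ^ g)) ->
  normal_in (closed_gen G S) G.
Proof.
move=> SJ; split; [exact: closed_gen_subgroup|split; first exact: closed_gen_sub].
move=> g x Gg hx K [sK KG [C [cC eK]] SK].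
have Gg' := subgroupV sG Gg.
have conjgK' y : G (y ^ g) -> G y.
  by move=> Gy; have := subgroupJ sG Gy Gg'; rewrite conjgK.
apply: (hx [set y | K (y ^ g)]); split.
- split=> [|a b]; first by rewrite /= conj1g; exact: subgroup1.
  by rewrite /= conjMg conjVg; apply: sK.2.
- by move=> y /KG; apply: conjgK'.
- exists [set y | C (y ^ g)]; split; first exact: closed_conjg.
  apply/seteqP; split=> y /=; rewrite eK => -[Cy Gy]; split => //.
    exact: conjgK'.
  exact: subgroupJ.
- by move=> y Sy; apply: SK; apply: SJ.
Qed.

End ClosedGeneration.

(** * Quotients of topological groups *)

Section QuotientGroup.
Variables (T : topGroupType) (G N : set T).
Hypothesis hGN : subgroup G /\ normal_in N G.
Let sG : subgroup G. Proof. exact: hGN.1. Qed.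
Let sN : subgroup N. Proof. exact: hGN.2.1. Qed.
Let NJ g x : G g -> N x -> N (x ^ g). Proof. exact: hGN.2.2.2. Qed.

Let cosetC x y : N (x^-1 * y) -> N (y^-1 * x).
Proof. by move=> /(subgroupV sN); rewrite invgM invgK. Qed.

Let cosetT x y z : N (x^-1 * y) -> N (y^-1 * z) -> N (x^-1 * z).
Proof. by move=> Nxy /(subgroupM sN Nxy); rewrite mulgA mulgK. Qed.

(* Points outside [G] are treated as [1], so that [coset_repr] is idempotent everywhere. *)
Definition in_G_or_1 x := if pselect (G x) then x else 1.

Lemma in_G_or_1_mem x : G (in_G_or_1 x).
Proof. by rewrite /in_G_or_1; case: pselect => // nGx; exact: subgroup1. Qed.

Lemma in_G_or_1E x : G x -> in_G_or_1 x = x.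
Proof. by rewrite /in_G_or_1; case: pselect. Qed.

Definition coset_repr x := xget 1 [set y | G y /\ N ((in_G_or_1 x)^-1 * y)].

Lemma coset_repr_spec x : G (coset_repr x) /\ N ((in_G_or_1 x)^-1 * coset_repr x).
Proof.
apply: (@xgetPex _ 1 [set y | G y /\ N ((in_G_or_1 x)^-1 * y)]).
exists (in_G_or_1 x); split; first exact: in_G_or_1_mem.
by rewrite mulVg; exact: subgroup1.
Qed.

Lemma coset_repr_mem x : G (coset_repr x).
Proof. by case: (coset_repr_spec x). Qed.

Lemma coset_repr_rel x : G x -> N (x^-1 * coset_repr x).
Proof. by move=> Gx; have [_] := coset_repr_spec x; rewrite in_G_or_1E. Qed.

Lemma coset_repr_eq x y : G x -> G y -> N (x^-1 * y) -> coset_repr x = coset_repr y.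
Proof.
move=> Gx Gy Nxy; rewrite /coset_repr !in_G_or_1E //; congr xget.
apply/seteqP; split=> z [Gz Nz]; split => //.
  exact: cosetT (cosetC Nxy) Nz.
exact: cosetT Nxy Nz.
Qed.

Lemma coset_reprP x y : G x -> G y -> coset_repr x = coset_repr y <-> N (x^-1 * y).
Proof.
move=> Gx Gy; split=> [e|]; last exact: coset_repr_eq.
by apply: cosetT (coset_repr_rel Gx) _; rewrite e; apply: cosetC; exact: coset_repr_rel.
Qed.

Lemma coset_repr_in_G_or_1 x : coset_repr (in_G_or_1 x) = coset_repr x.
Proof. by rewrite /coset_repr in_G_or_1E //; exact: in_G_or_1_mem. Qed.

Lemma coset_repr_id x : coset_repr (coset_repr x) = coset_repr x.
Proof.
have [Gr Nr] := coset_repr_spec x.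
rewrite -[RHS]coset_repr_in_G_or_1; apply: coset_repr_eq => //.
  exact: in_G_or_1_mem.
exact: cosetC.
Qed.

Lemma coset_reprMl x y : G x -> G y -> coset_repr (coset_repr x * y) = coset_repr (x * y).
Proof.
move=> Gx Gy; apply: coset_repr_eq; [|exact: subgroupM|].
  exact: subgroupM (coset_repr_mem x) Gy.
have := NJ Gy (cosetC (coset_repr_rel Gx)).
by rewrite conjgE invgM !mulgA.
Qed.

Lemma coset_reprMr x y : G x -> G y -> coset_repr (x * coset_repr y) = coset_repr (x * y).
Proof.
move=> Gx Gy; apply: coset_repr_eq; [|exact: subgroupM|].
  exact: subgroupM Gx (coset_repr_mem y).
by rewrite invgM -mulgA mulKg; apply: cosetC; exact: coset_repr_rel.
Qed.

Lemma coset_reprV x : G x -> coset_repr (coset_repr x)^-1 = coset_repr x^-1.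
Proof.
move=> Gx; apply: coset_repr_eq; [exact: subgroupV (coset_repr_mem x)|exact: subgroupV|].
have := NJ (subgroupV sG Gx) (coset_repr_rel Gx).
by rewrite conjgE !invgK !mulgA mulgV mul1g.
Qed.

(* The argument only records the hypotheses on which the group structure depends. *)
Definition Quot (_ : subgroup G /\ normal_in N G) := {x : T | coset_repr x == x}.
Local Notation Q := (Quot hGN).

Definition qproj x : Q := exist _ (coset_repr x) (introT eqP (coset_repr_id x)).

Lemma coset_repr_val (a : Q) : coset_repr (val a) = val a.
Proof. by case: a => /= x /eqP. Qed.

Lemma val_mem (a : Q) : G (val a).
Proof. by rewrite -coset_repr_val; exact: coset_repr_mem. Qed.

Lemma qproj_val (a : Q) : qproj (val a) = a.
Proof. by apply: val_inj; rewrite /= coset_repr_val. Qed.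

Lemma qproj_eq x y : coset_repr x = coset_repr y -> qproj x = qproj y.
Proof. by move=> e; apply: val_inj. Qed.

Definition quot_one : Q := qproj 1.
Definition quot_mul (a b : Q) : Q := qproj (val a * val b).
Definition quot_inv (a : Q) : Q := qproj (val a)^-1.

Lemma quot_mulA : associative quot_mul.
Proof.
move=> a b c; apply: qproj_eq => /=.
have Ga := val_mem a; have Gb := val_mem b; have Gc := val_mem c.
by rewrite coset_reprMl ?coset_reprMr ?mulgA //; apply: subgroupM.
Qed.

Lemma quot_mul1g : left_id quot_one quot_mul.
Proof.
move=> a; rewrite -[RHS]qproj_val; apply: qproj_eq => /=.
by rewrite coset_reprMl ?mul1g //; [exact: subgroup1|exact: val_mem].
Qed.

Lemma quot_mulg1 : right_id quot_one quot_mul.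
Proof.
move=> a; rewrite -[RHS]qproj_val; apply: qproj_eq => /=.
by rewrite coset_reprMr ?mulg1 //; [exact: val_mem|exact: subgroup1].
Qed.

Lemma quot_mulVg : left_inverse quot_one quot_inv quot_mul.
Proof.
move=> a; apply: qproj_eq => /=.
have Ga := val_mem a; have Ga' := subgroupV sG Ga.
by rewrite coset_reprMl ?mulVg.
Qed.

Lemma quot_mulgV : right_inverse quot_one quot_inv quot_mul.
Proof.
move=> a; apply: qproj_eq => /=.
have Ga := val_mem a; have Ga' := subgroupV sG Ga.
by rewrite coset_reprMr ?mulgV.
Qed.

HB.instance Definition _ := [isSub for (@sval T (fun x => coset_repr x == x)) : Q -> T].
HB.instance Definition _ := [Choice of Q by <:].
HB.instance Definition _ :=
  isGroup.Build Q quot_mulA quot_mul1g quot_mulg1 quot_mulVg quot_mulgV.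

End QuotientGroup.

Section QuotientTopology.
Variables (T : topGroupType) (G N : set T).
Hypothesis hGN : subgroup G /\ normal_in N G.
Let sG : subgroup G. Proof. exact: hGN.1. Qed.
Let sN : subgroup N. Proof. exact: hGN.2.1. Qed.
Let NG : N `<=` G. Proof. exact: hGN.2.2.1. Qed.

Local Notation Q := (Quot hGN).
Local Notation qproj := (qproj hGN).

Definition quot_open (A : set Q) : Prop :=
  exists2 O, open O & O `&` G = [set x | A (qproj x)] `&` G.

Lemma quot_openT : quot_open setT.
Proof. by exists setT => //; exact: openT. Qed.

Lemma quot_openI : setI_closed quot_open.
Proof.
move=> A B [O1 oO1 e1] [O2 oO2 e2]; exists (O1 `&` O2); first exact: openI.
by rewrite -[in LHS](setIid G) setIACA e1 e2 setIACA setIid.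
Qed.

Lemma quot_openU (I : Type) (f : I -> set Q) :
  (forall i, quot_open (f i)) -> quot_open (\bigcup_i f i).
Proof.
move=> /(_ _)/cid2 of_spec; exists (\bigcup_i projT1 (of_spec i)).
  by apply: bigcup_open => i _; case: (of_spec i).
rewrite !setI_bigcupl; apply: eq_bigcupr => i _; by case: (of_spec i).
Qed.

HB.instance Definition _ := isOpenTopological.Build Q quot_openT quot_openI quot_openU.

Lemma qprojM x y : G x -> G y -> qproj (x * y) = qproj x * qproj y.
Proof.
move=> Gx Gy; apply: qproj_eq => /=.
by rewrite coset_reprMr ?coset_reprMl //; exact: coset_repr_mem.
Qed.

Lemma qprojV x : G x -> qproj x^-1 = (qproj x)^-1.
Proof. by move=> Gx; apply: qproj_eq => /=; rewrite coset_reprV. Qed.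

Lemma qprojJ x g : G x -> G g -> qproj (x ^ g) = qproj x ^ qproj g.
Proof.
move=> Gx Gg; have Gg' := subgroupV sG Gg.
by rewrite !conjgE qprojM ?qprojM ?qprojV //; apply: subgroupM.
Qed.

Lemma qproj_eqP x y : G x -> G y -> qproj x = qproj y <-> N (x^-1 * y).
Proof.
move=> Gx Gy; rewrite -(coset_reprP hGN Gx Gy); split=> [/(congr1 val)//|].
exact: qproj_eq.
Qed.

Lemma qproj_eq1 x : G x -> qproj x = 1 <-> N x.
Proof.
move=> Gx; have G1 := subgroup1 sG.
rewrite -[1]/(qproj 1) (qproj_eqP Gx G1) mulg1.
by split=> /(subgroupV sN); rewrite ?invgK.
Qed.

Lemma qproj_surj (a : Q) : exists2 x, G x & qproj x = a.
Proof. by exists (val a); [exact: val_mem|exact: qproj_val]. Qed.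

Lemma qproj_image : qproj @` G = setT.
Proof. by apply/seteqP; split => // a _; have [x Gx <-] := qproj_surj a; exists x. Qed.

Lemma qproj_continuous : {within G, continuous qproj}.
Proof. by apply/within_continuousP => A [O oO e]; exists O. Qed.

(* The saturation of [O `&` G] is the union of the translates [O * n^-1], [n \in N]. *)
Lemma qproj_open (O : set T) : open O -> open (qproj @` (O `&` G)).
Proof.
move=> oO; exists (\bigcup_(n in N) [set z | O (z * n)]).
  by apply: bigcup_open => n _; exact: open_mulgr.
apply/seteqP; split=> x [].
  move=> [n Nn /= Oxn] Gx; split => //.
  have Gxn : G (x * n) by apply: subgroupM => //; exact: NG.
  exists (x * n) => //; apply/(qproj_eqP Gxn Gx).
  by rewrite invgM -mulgA mulVg mulg1; exact: subgroupV.
move=> [y [Oy Gy] exy] Gx; split => //.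
by exists (x^-1 * y); [apply/(qproj_eqP Gx Gy)|rewrite /= mulVKg].
Qed.

Lemma qproj_nbhs (O : set T) x :
  open O -> O x -> G x -> nbhs (qproj x) (qproj @` (O `&` G)).
Proof.
by move=> oO Ox Gx; apply: open_nbhs_nbhs; split; [exact: qproj_open|exists x].
Qed.

Lemma quot_mul_continuous : continuous (fun ab : Q * Q => ab.1 * ab.2).
Proof.
apply: continuous_openP => -[a b] A [O oO e] /=.
have [x Gx <-] := qproj_surj a; have [y Gy <-] := qproj_surj b => Aab.
have Oxy : O (x * y).
  by have [] : (O `&` G) (x * y) by rewrite e; split => //=; [rewrite qprojM|exact: subgroupM].
have [Ox [Oy [oOx oOy Oxx Oyy OM]]] := open_mulg_nbhs oO Oxy.
exists (qproj @` (Ox `&` G), qproj @` (Oy `&` G)); first by split; apply: qproj_nbhs.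
move=> [_ _] /= [[x' [Ox' Gx'] <-] [y' [Oy' Gy'] <-]] /=.
have : (O `&` G) (x' * y') by split; [exact: OM|exact: subgroupM].
by rewrite e => -[/=]; rewrite qprojM.
Qed.

Lemma quot_inv_continuous : continuous (fun a : Q => a^-1).
Proof.
apply: continuous_openP => a A [O oO e] /=.
have [x Gx <-] := qproj_surj a => Aa.
have Gx' := subgroupV sG Gx.
have Ox : [set z | O z^-1] x.
  by have [] : (O `&` G) x^-1 by rewrite e; split => //=; rewrite qprojV.
apply: filterS (qproj_nbhs (open_invg oO) Ox Gx) => _ [z [Oz Gz] <-] /=.
have : (O `&` G) z^-1 by split => //; exact: subgroupV.
by rewrite e => -[/=]; rewrite qprojV.
Qed.

HB.instance Definition _ := isTopGroup.Build Q quot_mul_continuous quot_inv_continuous.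

Lemma hom_qproj : hom G setT qproj.
Proof. by split=> //; [exact: qprojM|exact: qproj_continuous]. Qed.

Lemma quot_hausdorff : rel_closed N G -> rel_hausdorff (setT : set Q).
Proof.
move=> [C [cC eN]] a b _ _.
have [x Gx <-] := qproj_surj a; have [y Gy <-] := qproj_surj b => nexy.
have NC z : N z -> C z by rewrite eN => -[].
have nCxy : ~ C (x^-1 * y).
  move=> Cxy; apply: nexy; apply/(qproj_eqP Gx Gy); rewrite eN; split => //.
  by apply: subgroupM => //; exact: subgroupV.
have [Ox [Oy [oOx oOy Oxx Oyy OM]]] := open_mulg_nbhs (closed_openC cC) nCxy.
exists (qproj @` ([set u | Ox u^-1] `&` G)), (qproj @` (Oy `&` G)); split.
- by apply: qproj_open; exact: open_invg.
- exact: qproj_open.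
- by exists x => //; rewrite /= invgK.
- by exists y.
apply/seteqP; split => // _ [[[u [Ou Gu] <-] [v [Ov Gv] evu]] _].
by apply: (OM _ _ Ou Ov); apply/NC/(qproj_eqP Gu Gv).
Qed.

Lemma quot_compact : compact G -> compact (setT : set Q).
Proof.
move=> cG; rewrite -qproj_image.
by apply: continuous_compact cG; exact: qproj_continuous.
Qed.

Lemma quot_open_normal_base :
  (forall O, open O -> O 1 -> exists K, [/\ normal_in K G, rel_open K G & K `<=` O]) ->
  forall O : set Q, open O -> O 1 ->
    exists M, [/\ normal_in M setT, rel_open M setT & M `<=` O].
Proof.
move=> base O [O' oO' e] O1.
have O'1 : O' 1 by have [] : (O' `&` G) 1 by rewrite e; split => //; exact: subgroup1.
have [K [[sK [KG KJ]] [K' [oK' eK]] KO']] := base O' oO' O'1.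
exists (qproj @` K); split.
- split; [split|split] => //.
  + by exists 1 => //; exact: subgroup1.
  + move=> _ _ [k1 K1 <-] [k2 K2 <-]; exists (k1 * k2^-1); first exact: sK.2.
    have Gk2 := KG _ K2.
    by rewrite qprojM ?qprojV //; [exact: KG|exact: subgroupV].
  + move=> g _ _ [k Kk <-]; have [h Gh <-] := qproj_surj g.
    by exists (k ^ h); [exact: KJ|rewrite qprojJ //; exact: KG].
- exists (qproj @` K); split; last by rewrite setIT.
  by rewrite eK; exact: qproj_open.
- move=> _ [k Kk <-].
  have : (O' `&` G) k by split; [exact: KO'|exact: KG].
  by rewrite e => -[].
Qed.

Lemma quot_index_ppow p :
  (forall K, normal_in K G -> rel_open K G -> index_ppow p K G) ->
  forall M : set Q, normal_in M setT -> rel_open M setT -> index_ppow p M setT.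
Proof.
move=> index M [sM [_ MJ]] [M' [oM' eM]]; rewrite setIT in eM; subst M'.
have [O oO e] := oM'.
pose K := [set x | G x /\ M (qproj x)].
have nK : normal_in K G.
  split; [split|split].
  - by split; [exact: subgroup1|exact: sM.1].
  - move=> x y [Gx Mx] [Gy My]; have Gy' := subgroupV sG Gy.
    by split; [exact: subgroupM|rewrite qprojM ?qprojV //; exact: sM.2].
  - by move=> x [].
  - move=> g x Gg [Gx Mx]; split; first exact: subgroupJ.
    by rewrite qprojJ //; apply: MJ.
have oK : rel_open K G by exists O; split => //; rewrite e setIC.
have [s [k [size_s s_mem s_inj s_surj]]] := index K nK oK.
have Gs i : G (nth 1 s i).
  case: (ltnP i (size s)) => [/(mem_nth 1)/s_mem //|/(nth_default 1) ->].
  exact: subgroup1.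
have qprojD i j :
    (qproj (nth 1 s i))^-1 * qproj (nth 1 s j) = qproj ((nth 1 s i)^-1 * nth 1 s j).
  by rewrite qprojM ?qprojV //; exact: subgroupV.
exists (map qproj s), k; split=> [||i j|h _].
- by rewrite size_map.
- by [].
- rewrite size_map => lti ltj; rewrite !(nth_map 1) // qprojD => Mij.
  by apply: s_inj => //; split => //; apply: subgroupM => //; exact: subgroupV.
- have [x Gx <-] := qproj_surj h; have [i lti [_ Mi]] := s_surj x Gx.
  exists i; rewrite ?size_map // (nth_map 1) // -qprojV // -qprojM //; exact: subgroupV.
Qed.

Lemma quot_pro_p p : pro_p p G -> rel_closed N G -> pro_p p (setT : set Q).
Proof.
move=> [_ cG _ base index] cN; split => //.
- exact: quot_compact.
- exact: quot_hausdorff.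
- exact: quot_open_normal_base.
- exact: quot_index_ppow.
Qed.

Lemma quot_is_quotient : rel_closed N G -> is_quotient G N setT qproj.
Proof.
move=> cN; split; [exact: hom_qproj|exact: qproj_image|exact: quot_hausdorff|].
exact: qproj_eq1.
Qed.

Lemma hom_quot_factor (K : topGroupType) (HK : set K) (psi : T -> K) :
  hom G HK psi -> N `<=` [set x | psi x = 1] ->
  exists2 phi : Q -> K, hom setT HK phi & forall x, G x -> phi (qproj x) = psi x.
Proof.
move=> hpsi psiN.
have psi_qproj x : G x -> psi (val (qproj x)) = psi x.
  move=> Gx; have Nx := coset_repr_rel hGN Gx.
  have -> : val (qproj x) = x * (x^-1 * coset_repr G N x) by rewrite mulVKg.
  by rewrite (hom_mulg hpsi) ?(psiN _ Nx : _ = 1) ?mulg1 //; exact: NG.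
exists (fun a => psi (val a)) => //; split.
- move=> a b _ _; have [x Gx <-] := qproj_surj a; have [y Gy <-] := qproj_surj b.
  by rewrite -qprojM // !psi_qproj ?(hom_mulg hpsi) //; exact: subgroupM.
- by move=> _ [a _ <-]; apply: (hom_mem hpsi); exact: val_mem.
- apply/within_continuousP => O oO.
  have [O' oO' e] := (within_continuousP _ _).1 (hom_continuous hpsi) O oO.
  exists [set a | O (psi (val a))] => //; exists O' => //.
  rewrite e; apply/seteqP.
  by split=> x [Ox Gx]; split => //; move: Ox => /=; rewrite psi_qproj.
Qed.

End QuotientTopology.

(** * The quotient of [Π1(G, Γ)] by [Ũ] *)

Section FundamentalGroupQuotient.
Local Unset Implicit Arguments.
Variables (p : nat) (V E : finType) (d0 d1 : E -> V) (D : {set E}).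
Variables (TV : V -> topGroupType) (HV : forall v, set (TV v)).
Variables (TE : E -> topGroupType) (HE : forall e, set (TE e)).
Variables (del0 : forall e, TE e -> TV (d0 e)) (del1 : forall e, TE e -> TV (d1 e)).
Hypothesis hgraph : graph_of_pro_p p V E d0 d1 TV HV TE HE del0 del1.
Variables (T : topGroupType) (G : set T) (iota : forall v, TV v -> T) (t : E -> T).
Hypothesis hG : is_pi1 p V E d0 d1 TV HV TE HE del0 del1 D T G iota t.
Variables (U : set T) (hU : normal_in U G).

Let sG : subgroup G. Proof. by case: hG => -[]. Qed.
Let sV (v : V) : subgroup (HV v). Proof. by case: hgraph => /(_ v) []. Qed.
Let hiota (v : V) : hom (HV v) G (iota v). Proof. by case: hG => _ []. Qed.
Let iota_mem {v : V} {y : TV v} : HV v y -> G (iota v y).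
Proof. exact: (hom_mem (hiota v)). Qed.

Definition vertex_conj_in : set T :=
  [set x | exists g v y, [/\ G g, HV v y, x = iota v y ^ g & U x]].

Lemma vertex_conj_in_sub : vertex_conj_in `<=` G.
Proof.
by move=> _ [g [v [y [Gg Hy -> _]]]]; apply: subgroupJ => //; exact: iota_mem.
Qed.

Lemma vertex_conj_inJ g x : G g -> vertex_conj_in x -> vertex_conj_in (x ^ g).
Proof.
move=> Gg [h [v [y [Gh Hy -> Ux]]]]; exists (h * g), v, y; split => //.
- exact: subgroupM.
- by rewrite conjgM.
- by apply: hU.2.2.
Qed.

Lemma vertex_conj_gen_normal : normal_in (closed_gen G vertex_conj_in) G.
Proof.
apply: closed_gen_normal => //; [exact: vertex_conj_in_sub|].
move=> g x; exact: vertex_conj_inJ.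
Qed.

Section QuotientPresentation.
Variables (R : topGroupType) (GU : set R) (rho : T -> R).
Hypothesis hrho : is_quotient G U GU rho.
Variable hGUt : subgroup G /\ normal_in (closed_gen G vertex_conj_in) G.

Local Notation Q := (Quot hGUt).
Local Notation qproj := (qproj hGUt).
Local Notation HVU := (fun v => rho @` (iota v @` HV v)).
Local Notation HEU := (fun e => rho @` (iota (d1 e) @` (del1 e @` HE e))).
Local Notation del0U := (fun e x => rho (t e) * x * (rho (t e))^-1).
Local Notation del1U := (fun (e : E) (x : R) => x).

Let hrho_hom : hom G GU rho. Proof. by case: hrho. Qed.
Let rhoM x y : G x -> G y -> rho (x * y) = rho x * rho y.
Proof. exact: (hom_mulg hrho_hom). Qed.
Let rhoV x : G x -> rho x^-1 = (rho x)^-1.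
Proof. exact: (homV hrho_hom sG). Qed.

Let hrel e g :
  HE e g -> iota (d0 e) (del0 e g) = t e * iota (d1 e) (del1 e g) * (t e)^-1.
Proof. by case: hG => _ [_ _ _ /(_ e g)]. Qed.
Let ht e : G (t e). Proof. by case: hG => _ [_ /(_ e)]. Qed.
Let htD e : e \in D -> t e = 1. Proof. by case: hG => _ [_ _ /(_ e)]. Qed.
Let HV0 {e : E} {g : TE e} : HE e g -> HV (d0 e) (del0 e g).
Proof. by case: hgraph => _ _ /(_ e) [hdel _] _; exact: (hom_mem hdel). Qed.
Let HV1 {e : E} {g : TE e} : HE e g -> HV (d1 e) (del1 e g).
Proof. by case: hgraph => _ _ _ /(_ e) [hdel _]; exact: (hom_mem hdel). Qed.
Let rho_ker x : G x -> rho x = 1 <-> U x. Proof. by case: hrho => _ _ _; apply. Qed.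

(* Two lifts of [r \in G(v)U/U] to [G(v)] differ by an element of
   [G(v) \cap U], which lies in [Ũ]: this is [iotaQE]. *)
Definition vertex_lift v r := xget 1 [set y | HV v y /\ rho (iota v y) = r].
Definition iotaQ v r : Q := qproj (iota v (vertex_lift v r)).
Definition tQ e : Q := qproj (t e).

Lemma iotaQE v y : HV v y -> iotaQ v (rho (iota v y)) = qproj (iota v y).
Proof.
move=> Hy; rewrite /iotaQ /vertex_lift.
case: xgetP => [y' _ [Hy' ey']|/(_ y)[]//].
have Hy'y := subgroupM (sV v) (subgroupV (sV v) Hy') Hy.
have Gy := iota_mem Hy; have Gy' := iota_mem Hy'; have Gy'V := subgroupV sG Gy'.
apply/(qproj_eqP hGUt Gy' Gy).
rewrite -(homV (hiota v)) // -(hom_mulg (hiota v)) //; last exact: subgroupV.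
apply: sub_closed_gen; exists 1, v, (y'^-1 * y); split; rewrite ?conjg1 //.
  exact: subgroup1.
apply/rho_ker; first exact: iota_mem.
rewrite (hom_mulg (hiota v)) ?(homV (hiota v)) //; last exact: subgroupV.
by rewrite rhoM ?rhoV ?ey' ?mulVg.
Qed.

Lemma rho_edge_relation e g : HE e g ->
  rho (t e) * rho (iota (d1 e) (del1 e g)) * (rho (t e))^-1 = rho (iota (d0 e) (del0 e g)).
Proof.
move=> Hg; have G1 := iota_mem (HV1 Hg); have Gt := ht e.
by rewrite hrel // -rhoV // -!rhoM //; [exact: subgroupM|exact: subgroupV].
Qed.

Lemma hom_rho_iota v : hom (HV v) (HVU v) (rho \o iota v).
Proof.
split=> [y z Hy Hz|_ [y Hy <-]|] /=.
- by rewrite (hom_mulg (hiota v)) // rhoM //; exact: iota_mem.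
- by exists (iota v y) => //; exists y.
- apply: within_continuous_comp (hom_continuous (hiota v)) _ (hom_continuous hrho_hom).
  by move=> _ [y Hy <-]; exact: iota_mem.
Qed.

Lemma hom_iotaQ v : hom (HVU v) setT (iotaQ v).
Proof.
have hrho_iota : hom (HV v) GU (rho \o iota v) by exact: hom_comp (hiota v) hrho_hom.
split=> //.
- move=> _ _ [_ [y Hy <-] <-] [_ [z Hz <-] <-].
  have Gy := iota_mem Hy; have Gz := iota_mem Hz.
  rewrite -rhoM // -(hom_mulg (hiota v)) // !iotaQE //; last exact: subgroupM.
  by rewrite (hom_mulg (hiota v)) // qprojM.
- rewrite image_comp.
  apply: (continuous_factor (H := GU) (g := qproj \o iota v)).
  + by case: hgraph => /(_ v) [].
  + by case: hrho => _ _ hGU.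
  + by move=> _ [y Hy <-]; exact: (hom_mem hrho_iota).
  + exact: hom_continuous hrho_iota.
  + have qproj_cont := qproj_continuous (hGN := hGUt).
    apply: within_continuous_comp (hom_continuous (hiota v)) _ qproj_cont.
    by move=> _ [y Hy <-]; exact: iota_mem.
  + by move=> y Hy /=; exact: iotaQE.
Qed.

Lemma quot_pi1_data :
  pi1_data V E d0 d1 (fun _ => R) HVU (fun _ => R) HEU del0U del1U D Q setT iotaQ tQ.
Proof.
split=> //; first exact: hom_iotaQ.
  by move=> e eD; rewrite /tQ htD.
move=> e _ [_ [_ [g Hg <-] <-] <-] /=.
have H0 := HV0 Hg; have H1 := HV1 Hg; have G1 := iota_mem H1.
have Gt := ht e; have GtV := subgroupV sG Gt; have Gt1 := subgroupM sG Gt G1.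
rewrite rho_edge_relation // !iotaQE // hrel //.
by rewrite /tQ -qprojV // !qprojM.
Qed.

Lemma pi1_data_pullback {K : topGroupType} {HK : set K} {iotaK : V -> R -> K}
    {tK : E -> K} :
  pi1_data V E d0 d1 (fun _ => R) HVU (fun _ => R) HEU del0U del1U D K HK iotaK tK ->
  pi1_data V E d0 d1 TV HV TE HE del0 del1 D K HK (fun v y => iotaK v (rho (iota v y))) tK.
Proof.
move=> [hK htK htKD hrelK]; split=> // [v|e g Hg].
  exact: hom_comp (hom_rho_iota v) (hK v).
rewrite -rho_edge_relation //; apply: hrelK.
by exists (iota (d1 e) (del1 e g)) => //; exists (del1 e g) => //; exists g.
Qed.

Lemma vertex_conj_gen_ker {K : topGroupType} {HK : set K} {iotaK : V -> R -> K}
    {psi : T -> K} :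
  subgroup HK -> rel_hausdorff HK -> hom G HK psi ->
  (forall v y, HV v y -> psi (iota v y) = iotaK v (rho (iota v y))) ->
  closed_gen G vertex_conj_in `<=` [set x | psi x = 1].
Proof.
move=> sK hausK hpsi psiI.
suff : closed_gen G vertex_conj_in `<=` [set x | G x /\ psi x = 1] by move=> sub x /sub[].
apply: (closed_gen_subG (subgroup_ker hpsi sG) _ (rel_closed_ker hpsi sK hausK)).
  by move=> ? [].
move=> _ [g [v [y [Gg Hy -> Ux]]]]; have Gy := iota_mem Hy.
split; first exact: subgroupJ.
have Uy : U (iota v y) by have := hU.2.2 _ _ (subgroupV sG Gg) Ux; rewrite conjgK.
have iotaK1 : iotaK v 1 = 1.
  have := psiI v 1 (subgroup1 (sV v)).
  by rewrite (hom1 (hiota v) (sV v)) (hom1 hpsi sG) (hom1 hrho_hom sG).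
by rewrite (homJ hpsi sG) // psiI // (rho_ker _ Gy).2 // iotaK1 conj1g.
Qed.

Lemma quot_universal (K : topGroupType) (HK : set K) (iotaK : V -> R -> K) (tK : E -> K) :
  pro_p p HK ->
  pi1_data V E d0 d1 (fun _ => R) HVU (fun _ => R) HEU del0U del1U D K HK iotaK tK ->
  let ok phi := [/\ hom setT HK phi, forall v x, HVU v x -> phi (iotaQ v x) = iotaK v x
                  & forall e, phi (tQ e) = tK e] in
  (exists phi, ok phi) /\
  (forall phi1 phi2, ok phi1 -> ok phi2 -> forall x, setT x -> phi1 x = phi2 x).
Proof.
move=> pK dK ok; have [sK _ hausK _ _] := pK; have [_ _ univ] := hG.
have [[psi [hpsi psiI psit]] psi_uniq] := univ K HK _ tK pK (pi1_data_pullback dK).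
have ok_pullback phi : ok phi ->
    [/\ hom G HK (phi \o qproj),
        forall v y, HV v y -> phi (qproj (iota v y)) = iotaK v (rho (iota v y))
      & forall e, phi (qproj (t e)) = tK e].
  case=> hphi phiI phit; split=> // [|v y Hy].
    exact: hom_comp (hom_qproj hGUt) hphi.
  by rewrite -iotaQE // phiI //; exists (iota v y) => //; exists y.
have ker_psi := vertex_conj_gen_ker sK hausK hpsi psiI.
have [phi hphi phiE] := hom_quot_factor hGUt hpsi ker_psi.
split.
  exists phi; split=> // [v _ [_ [y Hy <-] <-]|e].
    by rewrite iotaQE // phiE ?psiI //; exact: iota_mem.
  by rewrite /tQ phiE.
move=> phi1 phi2 ok1 ok2 q _; have [x Gx <-] := qproj_surj q.
exact: psi_uniq (ok_pullback _ ok1) (ok_pullback _ ok2) x Gx.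
Qed.

Lemma quot_is_pi1 :
  is_pi1 p V E d0 d1 (fun _ => R) HVU (fun _ => R) HEU del0U del1U D Q setT iotaQ tQ.
Proof.
split; [|exact: quot_pi1_data|exact: quot_universal].
apply: quot_pro_p; first by case: hG => pG.
exact: closed_gen_rel_closed sG vertex_conj_in_sub.
Qed.

End QuotientPresentation.

Lemma quot_vertex_conj_gen_presentation (R : topGroupType) (GU : set R) (rho : T -> R) :
  is_quotient G U GU rho ->
  exists (Q : topGroupType) (GQ : set Q) (pi : T -> Q) (iotaQ : V -> R -> Q) (tQ : E -> Q),
    is_quotient G (closed_gen G vertex_conj_in) GQ pi /\
    is_pi1 p V E d0 d1 (fun _ => R) (fun v => rho @` (iota v @` HV v))
      (fun _ => R) (fun e => rho @` (iota (d1 e) @` (del1 e @` HE e)))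
      (fun e x => rho (t e) * x * (rho (t e))^-1) (fun e x => x) D Q GQ iotaQ tQ.
Proof.
move=> hrho; pose hGUt := conj sG vertex_conj_gen_normal.
exists (Quot hGUt), setT, (qproj hGUt), (iotaQ _ rho hGUt), (tQ hGUt); split.
  exact: quot_is_quotient (closed_gen_rel_closed sG vertex_conj_in_sub).
exact: (quot_is_pi1 _ _ _ hrho hGUt).
Qed.

End FundamentalGroupQuotient.

Theorem proposition2p14 (p : nat) (hp : prime p)
    (V E : finType) (d0 d1 : E -> V) (D : {set E}) (hD : spanning_tree V E d0 d1 D)
    (TV : V -> topGroupType) (HV : forall v, set (TV v))
    (TE : E -> topGroupType) (HE : forall e, set (TE e))
    (del0 : forall e, TE e -> TV (d0 e)) (del1 : forall e, TE e -> TV (d1 e))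
    (hgraph : graph_of_pro_p p V E d0 d1 TV HV TE HE del0 del1)
    (T : topGroupType) (G : set T) (iota : forall v, TV v -> T) (t : E -> T)
    (hG : is_pi1 p V E d0 d1 TV HV TE HE del0 del1 D T G iota t)
    (hproper : forall v, mono (HV v) G (iota v))
    (U : set T) (hU : normal_in U G) (hUc : rel_closed U G) :
  let Ut := closed_gen G
      [set x | exists g v y, [/\ G g, HV v y, x = (iota v y) ^ g & U x]] in
  normal_in Ut G /\
  forall (R : topGroupType) (GU : set R) (rho : T -> R),
    is_quotient G U GU rho ->
    exists (Q : topGroupType) (GQ : set Q) (pi : T -> Q)
           (iotaQ : V -> R -> Q) (tQ : E -> Q),
      is_quotient G Ut GQ pi /\
      is_pi1 p V E d0 d1
        (fun _ => R) (fun v => rho @` (iota v @` HV v))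
        (fun _ => R) (fun e => rho @` (iota (d1 e) @` (del1 e @` HE e)))
        (fun e x => rho (t e) * x * (rho (t e))^-1) (fun e x => x)
        D Q GQ iotaQ tQ.
Proof.
split; first by apply: vertex_conj_gen_normal; [exact: hG|exact: hU].
move=> R GU rho.
by apply: quot_vertex_conj_gen_presentation; [exact: hgraph|exact: hG|exact: hU].
Qed.
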